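(* Let $G=(V,E)$ be an atomic bispanning graph, $v\in V$ a vertex of degree $3$ with neighbours $x,y,z$ and incident edges $e_x,e_y,e_z$. Let $(S,T)$ be a pair of disjoint spanning trees of $G$ with $S\cup T=E$, and let $e_c$ be the attachment edge, $e_a$ the cycle edge and $e_b$ the non-cycle edge of $v$ and $(S,T)$. Then $(e_c,e_a,S,T)$ is an arc of $\vec\tau_3(G)$, i.e. $(e_c,e_a)$ is a unique edge exchange for $(S,T)$.
   Context: Graphs are finite, undirected, possibly with parallel edges, no loops. A spanning tree is $T\subseteq E$ with $(V,T)$ connected and acyclic; bispanning means $E$ is the union of two disjoint spanning trees; atomic means the only bispanning subgraphs are the graph itself and single vertices. For a spanning tree $T$ and $e\notin T$, $C_G(T,e)$ is the edge set of the unique cycle in $T\cup\{e\}$; for $e\in T$, $D_G(T,e)$ is the set of edges of $G$ with one end in each component of $(V,T\setminus\{e\})$. $(e,f,S,T)$ is an arc of $\vec\tau_3(G)$ iff either $e\in S,f\in T$ and $D_G(S,e)\cap C_G(T,e)=\{e,f\}$, or $e\in T,f\in S$ and $D_G(T,e)\cap C_G(S,e)=\{e,f\}$. Among $e_x,e_y,e_z$ exactly one lies in a different tree from the other two; it is the attachment edge $e_c$; of the other two, the one contained in the fundamental cycle $C_G(\cdot,e_c)$ of $e_c$ with respect to the tree not containing $e_c$ is the cycle edge $e_a$, the other the non-cycle edge $e_b$. *)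

From mathcomp Require Import all_boot.
Set Implicit Arguments. Unset Strict Implicit. Unset Printing Implicit Defensive.

(* Finite multigraphs: vertex type V, edge type E (both finite), and an
   endpoint map [ends : E -> V * V]; parallel edges are allowed, loops are
   excluded by a hypothesis of the main theorem. *)
Section MultiGraph.
Variables (V E : finType) (ends : E -> V * V).

Definition src (e : E) : V := (ends e).1.
Definition tgt (e : E) : V := (ends e).2.

Definition joins (e : E) (u w : V) : bool :=
  ((src e == u) && (tgt e == w)) || ((src e == w) && (tgt e == u)).

Definition incident (v : V) (e : E) : bool := (src e == v) || (tgt e == v).

Definition adj (F : {set E}) : rel V := fun u w => [exists e in F, joins e u w].

Definition conn (F : {set E}) : rel V := connect (adj F).

Definition deg (C : {set E}) (v : V) : nat := #|[set e in C | incident v e]|.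

Definition is_cycle (C : {set E}) : bool :=
  [&& C != set0,
      [forall v, (deg C v == 0) || (deg C v == 2)] &
      [forall u, forall w, ((0 < deg C u) && (0 < deg C w)) ==> conn C u w]].

Definition acyclic (F : {set E}) : Prop :=
  forall C : {set E}, C \subset F -> ~~ is_cycle C.

Definition inside (W : {set V}) (F : {set E}) : Prop :=
  forall e, e \in F -> src e \in W /\ tgt e \in W.

Definition spanning_tree_on (W : {set V}) (F : {set E}) : Prop :=
  [/\ inside W F, (forall u w, u \in W -> w \in W -> conn F u w) & acyclic F].

Definition spanning_tree (T : {set E}) : Prop := spanning_tree_on setT T.

Definition bispanning_on (W : {set V}) (F : {set E}) : Prop :=
  exists S T : {set E},
    [/\ [disjoint S & T], S :|: T = F, spanning_tree_on W S & spanning_tree_on W T].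

Definition bispanning : Prop := bispanning_on setT setT.

Definition atomic : Prop :=
  forall (W : {set V}) (F : {set E}), W != set0 -> inside W F ->
    bispanning_on W F -> (W = setT /\ F = setT) \/ #|W| = 1.

(* C_G(T,e): edge set of the unique cycle of T ∪ {e} (for e ∉ T) *)
Definition fund_cycle (T : {set E}) (e : E) : {set E} :=
  odflt set0 [pick C : {set E} | is_cycle C && (C \subset e |: T)].

(* D_G(T,e): edges with one end in each component of (V, T \ {e}) (for e ∈ T) *)
Definition fund_cut (T : {set E}) (e : E) : {set E} :=
  [set f | (conn (T :\ e) (src f) (src e) && conn (T :\ e) (tgt f) (tgt e))
        || (conn (T :\ e) (src f) (tgt e) && conn (T :\ e) (tgt f) (src e))].

Definition tau3_arc (e f : E) (S T : {set E}) : Prop :=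
  (e \in S /\ f \in T /\ fund_cut S e :&: fund_cycle T e = [set e; f])
  \/ (e \in T /\ f \in S /\ fund_cut T e :&: fund_cycle S e = [set e; f]).

End MultiGraph.

From mathcomp Require Import all_boot.

(* At the vertex v of degree 3 the tree A containing the attachment edge e_c
   has no other edge, so v is a leaf of A: deleting e_c from A isolates v and
   leaves the other vertices connected.  Hence the fundamental cut D(A, e_c)
   consists of the three edges at v, and intersecting it with the fundamental
   cycle C(B, e_c) (which contains e_c and e_a but not e_b) leaves {e_c, e_a}. *)

Set Implicit Arguments. Unset Strict Implicit. Unset Printing Implicit Defensive.

Section MultiGraphFacts.
Variables (V E : finType) (ends : E -> V * V).
Hypothesis noloop : forall e : E, (ends e).1 != (ends e).2.

Lemma joins_sym e u w : joins ends e u w = joins ends e w u.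
Proof. by rewrite /joins orbC. Qed.

Lemma adj_sym (F : {set E}) : symmetric (adj ends F).
Proof.
by move=> u w; apply/existsP/existsP => -[e]; exists e; rewrite joins_sym.
Qed.

Lemma joins_incident e u w : joins ends e u w -> incident ends u e.
Proof. by rewrite /incident => /orP[] /andP[/eqP-> /eqP->]; rewrite eqxx ?orbT. Qed.

Lemma incident_joins v e : incident ends v e -> exists u, joins ends e v u.
Proof.
by rewrite /incident /joins => /orP[] /eqP <-; [exists (tgt ends e) | exists (src ends e)];
  rewrite !eqxx ?orbT.
Qed.

Lemma joins_ends e u w :
  joins ends e u w -> src ends e = u /\ tgt ends e = w \/ src ends e = w /\ tgt ends e = u.
Proof. by case/orP=> /andP[/eqP-> /eqP->]; [left | right]. Qed.

Lemma joins_neq e u w : joins ends e u w -> u != w.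
Proof. by case/joins_ends=> -[<- <-]; [|rewrite eq_sym]; apply: noloop. Qed.

Lemma mem_fund_cycle (B : {set E}) e :
  acyclic ends B -> fund_cycle ends B e != set0 -> e \in fund_cycle ends B e.
Proof.
rewrite /fund_cycle; case: pickP => [C /andP[cycC sCB] acB _ | _ _] /=; last by rewrite eqxx.
apply/negPn/negP => eNC; apply: negP (acB C _) cycC.
apply/subsetP => f fC; move: (subsetP sCB f fC); rewrite !inE.
by case/orP=> // /eqP fe; rewrite -fe fC in eNC.
Qed.

Section Leaf.
Variables (A : {set E}) (v u : V) (ec : E).
Hypothesis connA : forall x y, conn ends A x y.
Hypothesis ec_vu : joins ends ec v u.
Hypothesis leaf_v : forall e, e \in A -> incident ends v e -> e = ec.

Let R := A :\ ec.

Lemma adj_leaf_v w : adj ends A v w -> w = u.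
Proof.
case/existsP=> e /andP[eA evw]; have ec_e := leaf_v eA (joins_incident evw); subst e.
by case: (joins_ends evw) => -[? ?]; case: (joins_ends ec_vu) => -[? ?]; congruence.
Qed.

Lemma adj_del_leaf x y : adj ends R x y -> (x == v) = (y == v).
Proof.
suff noR w : adj ends R v w -> False.
  have [-> /noR//|xv] := eqVneq x v; have [-> | //] := eqVneq y v.
  by rewrite adj_sym => /noR.
case/existsP=> e /andP[]; rewrite !inE => /andP[nec eA] /joins_incident ve.
by rewrite (leaf_v eA ve) eqxx in nec.
Qed.

Lemma conn_del_leaf x y : conn ends R x y -> (x == v) = (y == v).
Proof.
have closed_v : closed (adj ends R) (pred1 v) by move=> ? ?; apply: adj_del_leaf.
exact: closed_connect closed_v x y.
Qed.

Lemma conn_del_leaf_other w : w != v -> conn ends R u w.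
Proof.
move=> wv; have uv : u != v by rewrite eq_sym (joins_neq ec_vu).
pose X := [pred w | (w == v) || conn ends R u w].
suff closedX : closed (adj ends A) X.
  have := closed_connect closedX (connA u w).
  by rewrite !unfold_in /= (negPf wv) (negPf uv) /conn connect0 /= => <-.
suff stepX x y : adj ends A x y -> x \in X -> y \in X.
  by move=> x y xy; apply/idP/idP; apply: stepX; rewrite // adj_sym.
case/existsP=> e /andP[eA exy]; rewrite !unfold_in /=.
case/orP=> [/eqP xv | ux].
  rewrite (@adj_leaf_v y) /conn ?connect0 ?orbT //.
  by apply/existsP; exists e; rewrite eA -xv.
have [// | yv] := eqVneq y v; have xv : x != v by rewrite -(conn_del_leaf ux).
apply: connect_trans ux (connect1 _); apply/existsP; exists e.
rewrite exy andbT !inE eA andbT; apply: contraTneq (joins_incident ec_vu) => <-.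
by rewrite /incident; case: (joins_ends exy) => -[-> ->]; rewrite !(negPf xv, negPf yv).
Qed.

Lemma conn_del_leafE x y : conn ends R x y = ((x == v) == (y == v)).
Proof.
apply/idP/idP => [xy|]; first by rewrite (conn_del_leaf xy).
have [-> | xv] := eqVneq x v; first by move=> /eqP/esym/eqP ->; apply: connect0.
have [//|yv _] := eqVneq y v.
rewrite /conn (connect_trans _ (conn_del_leaf_other yv)) //.
by rewrite (sym_connect_sym (@adj_sym R)); apply: conn_del_leaf_other.
Qed.

Lemma fund_cut_leaf : fund_cut ends A ec = [set e | incident ends v e].
Proof.
have uv : u != v by rewrite eq_sym (joins_neq ec_vu).
apply/setP => f; rewrite !inE /fund_cut -/R !conn_del_leafE /incident.
have := noloop f; case: (joins_ends ec_vu) => -[-> ->]; rewrite /src /tgt;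
  case: (ends f) => a b /=; rewrite eqxx (negPf uv);
  case av: (a == v); case bv: (b == v) => //=;
  by move: av bv => /eqP -> /eqP ->; rewrite eqxx.
Qed.
End Leaf.

Lemma fund_cut_leafI_fund_cycle (A B : {set E}) v ec ea eb :
    [disjoint A & B] -> (forall x y, conn ends A x y) -> acyclic ends B ->
    [set e | incident ends v e] = [set ec; ea; eb] ->
    ec \in A -> ea \in B -> eb \in B ->
    ea \in fund_cycle ends B ec -> eb \notin fund_cycle ends B ec ->
  fund_cut ends A ec :&: fund_cycle ends B ec = [set ec; ea].
Proof.
move=> dAB connA acB star_v ecA eaB ebB eaC ebNC.
have [u ec_vu] : exists u, joins ends ec v u.
  by apply: incident_joins; rewrite -[incident _ _ _]inE star_v !inE eqxx.
have leaf_v e : e \in A -> incident ends v e -> e = ec.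
  move=> eA; rewrite -[incident _ _ _]inE star_v !inE => /orP[/orP[/eqP //|/eqP ee]|/eqP ee];
    by move: eA; rewrite ee => /(disjointFr dAB); rewrite ?eaB ?ebB.
have ecC : ec \in fund_cycle ends B ec by apply: mem_fund_cycle acB _; apply/set0Pn; exists ea.
have ebNec : eb != ec by apply: contraTneq ebB => ->; rewrite (disjointFr dAB).
have ebNea : eb != ea by apply: contraNneq ebNC => ->.
rewrite (fund_cut_leaf connA ec_vu leaf_v) star_v; apply/setP => f; rewrite !inE.
have [->|fNeb] := eqVneq f eb; first by rewrite (negPf ebNec) (negPf ebNea) (negPf ebNC).
by rewrite orbF andb_idr // => /orP[] /eqP->.
Qed.
End MultiGraphFacts.

Theorem mainTheorem16
  (V E : finType) (ends : E -> V * V)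
  (Hnoloop : forall e : E, (ends e).1 != (ends e).2)
  (Hbisp : bispanning ends) (Hatom : atomic ends)
  (v x y z : V) (ex ey ez : E)
  (Hxyz : [/\ x != y, y != z & x != z])
  (Hedist : [/\ ex != ey, ey != ez & ex != ez])
  (Hjx : joins ends ex v x) (Hjy : joins ends ey v y) (Hjz : joins ends ez v z)
  (Hdeg3 : [set e | incident ends v e] = [set ex; ey; ez])
  (S T : {set E})
  (HST : [disjoint S & T]) (HSTU : S :|: T = setT)
  (HS : spanning_tree ends S) (HT : spanning_tree ends T)
  (ec ea eb : E)
  (Habc : [set ec; ea; eb] = [set ex; ey; ez])
  (Hdist : [/\ ec != ea, ea != eb & ec != eb])
  (Hroles :
     (ec \in S /\ ea \in T /\ eb \in T /\
        ea \in fund_cycle ends T ec /\ eb \notin fund_cycle ends T ec)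
     \/
     (ec \in T /\ ea \in S /\ eb \in S /\
        ea \in fund_cycle ends S ec /\ eb \notin fund_cycle ends S ec)) :
  tau3_arc ends ec ea S T.
Proof.
rewrite -Habc in Hdeg3.
have [_ connS acS] := HS; have [_ connT acT] := HT.
case: Hroles => [[ecS [eaT [ebT [eaC ebNC]]]] | [ecT [eaS [ebS [eaC ebNC]]]]].
- left; do 2 split => //; apply: fund_cut_leafI_fund_cycle Hdeg3 _ _ _ _ _ => //.
  by move=> u w; apply: connS; rewrite inE.
- right; do 2 split => //; apply: fund_cut_leafI_fund_cycle Hdeg3 _ _ _ _ _ => //.
  + by rewrite disjoint_sym.
  + by move=> u w; apply: connT; rewrite inE.
Qed.
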